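(* Every Schnorr random set $A\subseteq\omega$ is canonically immune.
   Context: A canonical numbering of the finite sets is a surjective map $e\mapsto D_e$ from $\omega$ onto the finite subsets of $\omega$ such that $\{(e,x): x\in D_e\}$ is recursive and $e\mapsto|D_e|$ is recursive. A set $R\subseteq\omega$ is canonically immune if $R$ is infinite and there is a recursive function $h$ such that for every canonical numbering $(D_e)$ of the finite sets, for all but finitely many $e$, if $D_e\subseteq R$ then $|D_e|\le h(e)$. Schnorr randomness is with respect to the uniform (fair coin) measure on $2^\omega$, identifying sets with their characteristic sequences. *)

From Stdlib Require Import Arith List QArith.
Import ListNotations.
Local Open Scope nat_scope.

Inductive code : Type :=
| cZero : code
| cSucc : code
| cProj : nat -> code
| cComp : code -> list code -> code
| cPrimRec : code -> code -> code
| cMu : code -> code.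

Inductive eval : code -> list nat -> nat -> Prop :=
| ev_zero : forall a, eval cZero a 0
| ev_succ : forall a, eval cSucc a (S (hd 0 a))
| ev_proj : forall i a, eval (cProj i) a (nth i a 0)
| ev_comp : forall f gs a bs y,
    evals gs a bs -> eval f bs y -> eval (cComp f gs) a y
| ev_pr0 : forall f g a y, eval f a y -> eval (cPrimRec f g) (0 :: a) y
| ev_prS : forall f g n a r y,
    eval (cPrimRec f g) (n :: a) r -> eval g (n :: r :: a) y ->
    eval (cPrimRec f g) (S n :: a) y
| ev_mu : forall f a n,
    eval f (n :: a) 0 ->
    (forall m, m < n -> exists k, eval f (m :: a) (S k)) ->
    eval (cMu f) a n
with evals : list code -> list nat -> list nat -> Prop :=
| evs_nil : forall a, evals [] a []
| evs_cons : forall g gs a b bs,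
    eval g a b -> evals gs a bs -> evals (g :: gs) a (b :: bs).

Definition recursive1 (f : nat -> nat) : Prop :=
  exists c, forall x, eval c [x] (f x).
Definition recursive2 (f : nat -> nat -> nat) : Prop :=
  exists c, forall x y, eval c [x; y] (f x y).
Definition recursive_rel (R : nat -> nat -> bool) : Prop :=
  recursive2 (fun x y => if R x y then 1 else 0).

(* Binary strings and their (bijective) coding by natural numbers.      *)
Definition bstring := list bool.

Fixpoint code_str (s : bstring) : nat :=
  match s with
  | [] => 0
  | b :: s' => 2 * code_str s' + (if b then 2 else 1)
  end.

Definition prefix (A : nat -> bool) (m : nat) : bstring := map A (seq 0 m).

Definition unif_ce (U : nat -> bstring -> Prop) : Prop :=
  exists c, forall n s, U n s <-> exists y, eval c [n; code_str s] y.

Fixpoint all_strings (L : nat) : list bstring :=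
  match L with
  | 0 => [[]]
  | S L' => map (cons false) (all_strings L') ++ map (cons true) (all_strings L')
  end.

Fixpoint is_prefix (s t : bstring) : bool :=
  match s, t with
  | [], _ => true
  | b :: s', c :: t' => Bool.eqb b c && is_prefix s' t'
  | _ :: _, [] => false
  end.

(* uniform measure of the union of the cylinders [s], s in F (F finite) *)
Definition mu_fin (F : list bstring) : Q := (
  let L := fold_right (fun s m => Nat.max (length s) m) 0%nat F in
  inject_Z (Z.of_nat (length (filter (fun t => existsb (fun s => is_prefix s t) F)
                                     (all_strings L))))
  / inject_Z (2 ^ Z.of_nat L))%Q.

Definition finite_sub (F : list bstring) (V : bstring -> Prop) : Prop :=
  forall s, In s F -> V s.

(* mu([V]) <= q, where [V] is the open class generated by V;
   mu([V]) = sup { mu_fin F : F finite subset of V } *)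
Definition mu_le (V : bstring -> Prop) (q : Q) : Prop :=
  forall F, finite_sub F V -> (mu_fin F <= q)%Q.

Definition pow2inv (n : nat) : Q := (1 / inject_Z (2 ^ Z.of_nat n))%Q.

(* Schnorr test: uniformly c.e. sequence of Sigma^0_1 classes [U_n] with
   mu([U_n]) <= 2^-n and mu([U_n]) a computable real uniformly in n:
   there is a recursive g with |mu([U_n]) - g(n,k)/2^k| <= 2^-k. *)
Definition SchnorrTest (U : nat -> bstring -> Prop) : Prop :=
  unif_ce U /\
  (forall n, mu_le (U n) (pow2inv n)) /\
  (exists g, recursive2 g /\
     forall n k,
       mu_le (U n) (inject_Z (Z.of_nat (g n k)) * pow2inv k + pow2inv k)%Q /\
       exists F, finite_sub F (U n) /\
         (inject_Z (Z.of_nat (g n k)) * pow2inv k - pow2inv k <= mu_fin F)%Q).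

(* A passes the test iff A is not in the intersection of the [U_n] *)
Definition SchnorrRandom (A : nat -> bool) : Prop :=
  forall U, SchnorrTest U -> exists n, forall m, ~ U n (prefix A m).

(* Canonical numberings of the finite sets.  D e is (the characteristic
   function of) D_e. *)
Definition canonical_numbering (D : nat -> nat -> bool) : Prop :=
  (exists card, recursive1 card /\
     forall e, exists l, NoDup l /\ length l = card e /\
       forall x, D e x = true <-> In x l) /\
  recursive_rel D /\
  (forall l : list nat, exists e, forall x, D e x = true <-> In x l).

Definition set_infinite (R : nat -> bool) : Prop :=
  forall n, exists m, n <= m /\ R m = true.

Definition canonically_immune (R : nat -> bool) : Prop :=
  set_infinite R /\
  exists h, recursive1 h /\
    forall D, canonical_numbering D ->
      exists N, forall e, N <= e ->
        (forall x, D e x = true -> R x = true) ->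
        forall l, NoDup l -> (forall x, D e x = true <-> In x l) ->
          length l <= h e.

(** Fix a canonical numbering D.  For e with |D_e| > e, the sets containing D_e
    form a clopen class of measure 2^-|D_e| <= 2^-(e+1), determined by a prefix
    whose length is computable from e (by searching for max D_e).  The classes
    U_n = U_{e >= n} [D_e ⊆ X and |D_e| > e] then have measure <= 2^-n, and the
    measure of U_n is computable: the requirements e >= n + k contribute at most
    2^-(n+k), and the first k of them are decided by a prefix of computable
    length.  So (U_n) is a Schnorr test, and a Schnorr random A avoids some U_n,
    which says |D_e| <= e whenever e >= n and D_e ⊆ A; hence h(e) = e works.
    That A is infinite comes from the same scheme, with the requirement
    "A is zero on [i, 2i+n]" in place of "D_e ⊆ A". *)
From Stdlib Require Import Arith List QArith Lia Bool ZArith ConstructiveEpsilon.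
Import ListNotations.
Local Open Scope nat_scope.

(** * Determinism of evaluation *)

Fixpoint code_size (c : code) : nat :=
  match c with
  | cComp f gs => S (code_size f + fold_right (fun g s => code_size g + s) 0 gs)
  | cPrimRec f g => S (code_size f + code_size g)
  | cMu f => S (code_size f)
  | _ => 1
  end.

Definition deterministic (c : code) := forall a y y', eval c a y -> eval c a y' -> y = y'.

Lemma evals_deterministic gs : (forall g, In g gs -> deterministic g) ->
  forall a bs bs', evals gs a bs -> evals gs a bs' -> bs = bs'.
Proof.
  induction gs as [|g gs IH]; intros Hd a bs bs' H1 H2.
  - inversion H1; inversion H2; subst; auto.
  - inversion H1 as [|g1 gs1 a1 b1 bs1 Hb1 Hbs1]; subst.
    inversion H2 as [|g2 gs2 a2 b2 bs2 Hb2 Hbs2]; subst.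
    f_equal.
    + apply (Hd g (or_introl eq_refl) a); auto.
    + apply IH with a; auto. intros; apply Hd; simpl; auto.
Qed.

Lemma primrec_deterministic f g : deterministic f -> deterministic g ->
  forall n a y y', eval (cPrimRec f g) (n :: a) y -> eval (cPrimRec f g) (n :: a) y' -> y = y'.
Proof.
  intros Hf Hg n. induction n; intros a y y' H1 H2; inversion H1; inversion H2; subst.
  - apply (Hf a); auto.
  - assert (r = r0) by (apply (IHn a); auto). subst. apply (Hg (n :: r0 :: a)); auto.
Qed.

Lemma deterministic_of_size k c : code_size c < k -> deterministic c.
Proof.
  revert c; induction k; intros c Hc; [lia|].
  destruct c; intros a y y' H1 H2; simpl in Hc.
  - inversion H1; inversion H2; subst; auto.
  - inversion H1; inversion H2; subst; auto.
  - inversion H1; inversion H2; subst; auto.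
  - inversion H1 as [| | |f1 gs1 a1 bs1 y1 Hs1 Hf1| | |]; subst.
    inversion H2 as [| | |f2 gs2 a2 bs2 y2 Hs2 Hf2| | |]; subst.
    assert (Hl : forall g, In g l -> deterministic g).
    { intros g Hg. apply IHk. clear -Hc Hg.
      induction l; simpl in *; [contradiction|].
      destruct Hg; subst; [lia|]. apply IHl; auto; lia. }
    rewrite (evals_deterministic l Hl a bs1 bs2 Hs1 Hs2) in Hf1.
    apply (IHk c ltac:(lia) bs2); auto.
  - destruct a as [|n a]; [inversion H1|].
    apply (primrec_deterministic c1 c2 (IHk c1 ltac:(lia)) (IHk c2 ltac:(lia)) n a); auto.
  - assert (Hf : deterministic c) by (apply IHk; lia).
    inversion H1 as [| | | | | |f1 a1 n1 E1 L1]; subst.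
    inversion H2 as [| | | | | |f2 a2 n2 E2 L2]; subst.
    destruct (lt_eq_lt_dec y y') as [[Hl|He]|Hl]; auto.
    + destruct (L2 y Hl) as [k0 Hk]. specialize (Hf _ _ _ E1 Hk). discriminate.
    + destruct (L1 y' Hl) as [k0 Hk]. specialize (Hf _ _ _ E2 Hk). discriminate.
Qed.

Lemma eval_deterministic c : deterministic c.
Proof. exact (deterministic_of_size (S (code_size c)) c (Nat.lt_succ_diag_r _)). Qed.

(** * Total recursive functions *)

Local Notation "a ## i" := (nth i a 0) (at level 1, format "a ## i").

Definition computes (c : code) (F : list nat -> nat) := forall a, eval c a (F a).

Record rfun := RFun { rcode : code; rval : list nat -> nat; rcodeP : computes rcode rval }.

Definition rfun_ext (f : rfun) (h : list nat -> nat) (H : forall a, rval f a = h a) : rfun.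
Proof. refine (RFun (rcode f) h _). intro a; rewrite <- H; apply rcodeP. Defined.

Lemma evals_rcodes gs a : evals (map rcode gs) a (map (fun g => rval g a) gs).
Proof. induction gs; simpl; constructor; auto. apply rcodeP. Qed.

Definition rcomp (f : rfun) (gs : list rfun) : rfun :=
  RFun (cComp (rcode f) (map rcode gs)) (fun a => rval f (map (fun g => rval g a) gs))
    (fun a => ev_comp _ _ _ _ _ (evals_rcodes gs a) (rcodeP f _)).

Fixpoint primrec (F G : list nat -> nat) (n : nat) (a : list nat) : nat :=
  match n with 0 => F a | S m => G (m :: primrec F G m a :: a) end.

Lemma eval_primrec f g n a :
  eval (cPrimRec (rcode f) (rcode g)) (n :: a) (primrec (rval f) (rval g) n a).
Proof.
  induction n; simpl; [constructor; apply rcodeP|]. econstructor; [apply IHn | apply rcodeP].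
Qed.

Definition rprimrec (f g x : rfun) (ys : list rfun) : rfun.
Proof.
  refine (RFun (cComp (cPrimRec (rcode f) (rcode g)) (rcode x :: map rcode ys))
       (fun a => primrec (rval f) (rval g) (rval x a) (map (fun y => rval y a) ys)) _).
  intro a. econstructor; [constructor; [apply rcodeP | apply evals_rcodes]|]. apply eval_primrec.
Defined.

Definition rzero : rfun := RFun cZero (fun _ => 0) (fun a => ev_zero a).
Definition rsucc : rfun.
Proof.
  refine (rfun_ext (RFun cSucc (fun a => S (hd 0 a)) (fun a => ev_succ a)) (fun a => S (a##0)) _).
  intro a; destruct a; reflexivity.
Defined.
Definition rproj (i : nat) : rfun := RFun (cProj i) (fun a => a##i) (fun a => ev_proj i a).

Fixpoint rconst (k : nat) : rfun :=
  match k with 0 => rzero | S k' => rcomp rsucc [rconst k'] end.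

Definition radd : rfun.
Proof.
  refine (rfun_ext (rprimrec (rproj 0) (rcomp rsucc [rproj 1]) (rproj 0) [rproj 1])
    (fun a => a##0 + a##1) _).
  intro a; simpl. generalize (a##0); induction n; simpl; auto.
Defined.

Definition rmul : rfun.
Proof.
  refine (rfun_ext (rprimrec rzero (rcomp radd [rproj 1; rproj 2]) (rproj 0) [rproj 1])
    (fun a => a##0 * a##1) _).
  intro a; simpl. generalize (a##0); induction n; simpl; auto. rewrite IHn. lia.
Defined.

Definition rpred : rfun.
Proof.
  refine (rfun_ext (rprimrec rzero (rproj 0) (rproj 0) []) (fun a => pred (a##0)) _).
  intro a; simpl. destruct (a##0); reflexivity.
Defined.

Definition rsub : rfun.
Proof.
  refine (rfun_ext (rprimrec (rproj 0) (rcomp rpred [rproj 1]) (rproj 1) [rproj 0])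
    (fun a => a##0 - a##1) _).
  intro a; simpl. generalize (a##1); induction n; simpl; [lia|]. rewrite IHn. lia.
Defined.

Definition rifz : rfun.
Proof.
  refine (rfun_ext (rprimrec (rproj 0) (rproj 3) (rproj 0) [rproj 1; rproj 2])
     (fun a => match a##0 with 0 => a##1 | S _ => a##2 end) _).
  intro a; simpl. destruct (a##0); reflexivity.
Defined.

Definition rleb : rfun.
Proof.
  refine (rfun_ext (rcomp rifz [rcomp rsub [rproj 0; rproj 1]; rconst 1; rconst 0])
     (fun a => if a##0 <=? a##1 then 1 else 0) _).
  intro a; simpl.
  destruct (Nat.leb_spec (a##0) (a##1)); destruct (a##0 - a##1) eqn:E; auto; lia.
Defined.

Definition reqb : rfun.
Proof.
  refine (rfun_ext (rcomp rmul [rcomp rleb [rproj 0; rproj 1]; rcomp rleb [rproj 1; rproj 0]])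
     (fun a => if a##0 =? a##1 then 1 else 0) _).
  intro a; simpl.
  destruct (Nat.leb_spec (a##0) (a##1)); destruct (Nat.leb_spec (a##1) (a##0));
  destruct (Nat.eqb_spec (a##0) (a##1)); auto; lia.
Defined.

Definition rpow2 : rfun.
Proof.
  refine (rfun_ext (rprimrec (rconst 1) (rcomp radd [rproj 1; rproj 1]) (rproj 0) [])
    (fun a => 2 ^ (a##0)) _).
  intro a; simpl. generalize (a##0); induction n; simpl; auto. rewrite IHn. lia.
Defined.

Fixpoint sum_below (n : nat) (f : nat -> nat) : nat :=
  match n with 0 => 0 | S m => sum_below m f + f m end.

Lemma map_nth_seq (ps : list nat) : map (fun j => nth j ps 0) (seq 0 (length ps)) = ps.
Proof.
  induction ps; simpl; auto. f_equal. rewrite <- seq_shift, map_map. simpl. auto.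
Qed.

Definition rsum (P x : rfun) (ys : list rfun) : rfun.
Proof.
  refine (rfun_ext (rprimrec rzero
       (rcomp radd [rproj 1; rcomp P (rproj 0 :: map (fun j => rproj (S (S j))) (seq 0 (length ys)))])
       x ys)
     (fun a => sum_below (rval x a) (fun y => rval P (y :: map (fun g => rval g a) ys))) _).
  intro a. simpl. generalize (rval x a). induction n; simpl; auto. rewrite IHn. f_equal.
  f_equal. f_equal. rewrite map_map. simpl.
  rewrite <- (length_map (fun g => rval g a) ys) at 1. apply map_nth_seq.
Defined.

Definition riter (T : rfun) : rfun.
Proof.
  refine (rfun_ext (rprimrec (rproj 0) (rcomp T [rproj 1]) (rproj 0) [rproj 1])
     (fun a => Nat.iter (a##0) (fun v => rval T [v]) (a##1)) _).
  intro a; simpl. generalize (a##0); induction n; simpl; auto. rewrite IHn; auto.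
Defined.

Arguments Nat.modulo : simpl never.
Arguments Nat.div : simpl never.

Lemma sum_below_ext n f g : (forall y, y < n -> f y = g y) -> sum_below n f = sum_below n g.
Proof. induction n; simpl; intros; auto. rewrite IHn, H; auto. Qed.

(* division as a bounded sum, to stay within primitive recursion *)
Definition div_count (c d : nat) := sum_below c (fun y => if (y + 1) * d <=? c then 1 else 0).

Lemma div_count_div c d : 0 < d -> div_count c d = c / d.
Proof.
  intro Hd. unfold div_count.
  assert (H : forall n, sum_below n (fun y => if (y + 1) * d <=? c then 1 else 0) = Nat.min n (c / d)).
  { pose proof (Nat.div_mod c d ltac:(lia)) as Hm.
    pose proof (Nat.mod_upper_bound c d ltac:(lia)) as Hu.
    remember (c / d) as q. remember (c mod d) as r. clear Heqq Heqr.
    induction n; [reflexivity|]. cbn [sum_below]. rewrite IHn.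
    destruct (Nat.leb_spec ((n+1)*d) c).
    - destruct (le_lt_dec (n+1) q); [lia|].
      assert (d * (q+1) <= d * (n+1)) by (apply Nat.mul_le_mono_l; lia). nia.
    - destruct (le_lt_dec q n); [lia|].
      assert (d * (n+1) <= d * q) by (apply Nat.mul_le_mono_l; lia). nia. }
  rewrite H. assert (c / d <= c) by (apply Nat.Div0.div_le_upper_bound; nia). lia.
Qed.

Definition rdiv : rfun.
Proof.
  refine (rfun_ext (rsum (rcomp rleb [rcomp rmul [rcomp rsucc [rproj 0]; rproj 2]; rproj 1])
                         (rproj 0) [rproj 0; rproj 1])
    (fun a => div_count (a##0) (a##1)) _).
  intro a. simpl. unfold div_count. apply sum_below_ext. intros y _.
  replace (y+1) with (S y) by lia. reflexivity.
Defined.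

(** * Reading binary strings from their codes *)

Definition code_tail (x : nat) := pred x / 2.
Definition code_head (x : nat) := match x with 0 => 0 | S _ => if x mod 2 =? 0 then 1 else 0 end.
Definition code_length (x : nat) :=
  sum_below x (fun j => match Nat.iter j code_tail x with 0 => 0 | S _ => 1 end).

Definition rcode_tail : rfun.
Proof.
  refine (rfun_ext (rcomp rdiv [rcomp rpred [rproj 0]; rconst 2]) (fun a => code_tail (a##0)) _).
  intro a. simpl. rewrite div_count_div; auto.
Defined.

Definition rmod2 : rfun.
Proof.
  refine (rfun_ext (rcomp rsub [rproj 0; rcomp rmul [rconst 2; rcomp rdiv [rproj 0; rconst 2]]])
    (fun a => a##0 mod 2) _).
  intro a. simpl. rewrite div_count_div by lia. rewrite Nat.Div0.mod_eq. reflexivity.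
Defined.

Definition rcode_head : rfun.
Proof.
  refine (rfun_ext (rcomp rifz [rproj 0; rconst 0; rcomp reqb [rcomp rmod2 [rproj 0]; rconst 0]])
    (fun a => code_head (a##0)) _).
  intro a. simpl. unfold code_head. destruct (a##0); reflexivity.
Defined.

Definition rcode_bit : rfun.
Proof.
  refine (rfun_ext (rcomp rcode_head [rcomp (riter rcode_tail) [rproj 1; rproj 0]])
    (fun a => code_head (Nat.iter (a##1) code_tail (a##0))) _).
  intro a. reflexivity.
Defined.

Definition rcode_length : rfun.
Proof.
  refine (rfun_ext (rsum (rcomp rifz [rcomp (riter rcode_tail) [rproj 0; rproj 1]; rconst 0; rconst 1])
                         (rproj 0) [rproj 0])
     (fun a => code_length (a##0)) _).
  intro a. reflexivity.
Defined.

Lemma code_tail_str s : code_tail (code_str s) = code_str (tl s).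
Proof.
  unfold code_tail. destruct s as [|b s]; cbn [code_str tl]; [reflexivity|].
  rewrite <- Nat.div2_div. destruct b.
  - replace (pred (2 * code_str s + 2)) with (S (2 * code_str s)) by lia.
    apply Nat.div2_succ_double.
  - replace (pred (2 * code_str s + 1)) with (2 * code_str s) by lia.
    apply Nat.div2_double.
Qed.

Lemma skipn_S_tl (s : bstring) j : skipn (S j) s = tl (skipn j s).
Proof.
  revert j; induction s as [|a s IH]; intros [|j]; try reflexivity. apply IH.
Qed.

Lemma iter_code_tail_str s j : Nat.iter j code_tail (code_str s) = code_str (skipn j s).
Proof.
  induction j; [reflexivity|]. rewrite Nat.iter_succ, IHj, code_tail_str, skipn_S_tl. reflexivity.
Qed.

Lemma code_head_str s : code_head (code_str s) = match s with [] => 0 | b :: _ => if b then 1 else 0 end.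
Proof.
  destruct s as [|b s]; [reflexivity|]. cbn [code_str]. unfold code_head.
  destruct b.
  - replace (2 * code_str s + 2) with ((code_str s + 1) * 2) by lia.
    rewrite Nat.Div0.mod_mul. destruct ((code_str s + 1) * 2) eqn:Z; [lia|reflexivity].
  - replace (2 * code_str s + 1) with (1 + code_str s * 2) by lia.
    rewrite Nat.Div0.mod_add. reflexivity.
Qed.

Lemma nth_skipn_hd (s : bstring) j :
  nth j s false = match skipn j s with [] => false | b :: _ => b end.
Proof. revert j; induction s as [|a s IH]; intros [|j]; try reflexivity. apply IH. Qed.

Lemma code_bit_str s j : code_head (Nat.iter j code_tail (code_str s)) = if nth j s false then 1 else 0.
Proof.
  rewrite iter_code_tail_str, code_head_str, nth_skipn_hd. destruct (skipn j s); auto.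
Qed.

Lemma length_le_code_str (s : bstring) : length s <= code_str s.
Proof. induction s as [|[] s]; simpl; lia. Qed.

Lemma code_str_eq0 (s : bstring) : code_str s = 0 <-> s = [].
Proof. destruct s as [|[] s]; simpl; split; intro H; auto; try discriminate; lia. Qed.

Lemma sum_below_ltb m L : sum_below m (fun j => if j <? L then 1 else 0) = Nat.min m L.
Proof.
  induction m; [reflexivity|]. cbn [sum_below]. rewrite IHm. destruct (Nat.ltb_spec m L); lia.
Qed.

Lemma code_length_str s : code_length (code_str s) = length s.
Proof.
  unfold code_length. rewrite (sum_below_ext _ _ (fun j => if j <? length s then 1 else 0)).
  - rewrite sum_below_ltb. pose proof (length_le_code_str s). lia.
  - intros j _. rewrite iter_code_tail_str.
    destruct (code_str (skipn j s)) eqn:E.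
    + apply code_str_eq0, (f_equal (@length bool)) in E. rewrite length_skipn in E.
      simpl in E. destruct (Nat.ltb_spec j (length s)); lia.
    + assert (skipn j s <> []) by (intro H; apply code_str_eq0 in H; congruence).
      destruct (Nat.ltb_spec j (length s)); auto.
      exfalso. apply H. apply skipn_all2. lia.
Qed.

(** * Counting strings of a given length *)

Definition count_strings (L : nat) (P : bstring -> bool) : nat := length (filter P (all_strings L)).

Lemma length_filter_map {A B} (P : B -> bool) (f : A -> B) l :
  length (filter P (map f l)) = length (filter (fun x => P (f x)) l).
Proof. induction l; simpl; auto. destruct (P (f a)); simpl; auto. Qed.

Lemma count_strings_0 P : count_strings 0 P = if P [] then 1 else 0.
Proof. unfold count_strings; simpl. destruct (P []); reflexivity. Qed.

Lemma count_strings_S L P :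
  count_strings (S L) P = count_strings L (fun t => P (false :: t)) + count_strings L (fun t => P (true :: t)).
Proof. unfold count_strings; simpl. rewrite filter_app, length_app, !length_filter_map. reflexivity. Qed.

Lemma count_strings_snoc L P : count_strings (S L) P =
  count_strings L (fun t => P (t ++ [false])) + count_strings L (fun t => P (t ++ [true])).
Proof.
  revert P; induction L; intros P.
  - rewrite count_strings_S, !count_strings_0. reflexivity.
  - rewrite (count_strings_S (S L) P), (IHL (fun t => P (false :: t))), (IHL (fun t => P (true :: t))),
      (count_strings_S L (fun t => P (t ++ [false]))), (count_strings_S L (fun t => P (t ++ [true]))).
    simpl. lia.
Qed.

Lemma in_all_strings L t : In t (all_strings L) <-> length t = L.
Proof.
  revert t; induction L; intros t; simpl.
  - split; [intros [<-|[]]; reflexivity | destruct t; simpl; auto; discriminate].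
  - rewrite in_app_iff, !in_map_iff. split.
    + intros [[u [<- Hu]]|[u [<- Hu]]]; simpl; f_equal; apply IHL; auto.
    + destruct t as [|[] t]; simpl; intros H; [discriminate| |]; injection H as H.
      * right; exists t; split; auto; apply IHL; auto.
      * left; exists t; split; auto; apply IHL; auto.
Qed.

Lemma length_filter_mono {A} (P Q : A -> bool) l :
  (forall x, In x l -> P x = true -> Q x = true) ->
  length (filter P l) <= length (filter Q l).
Proof.
  induction l; simpl; intros H; auto.
  destruct (P a) eqn:E.
  - rewrite (H a (or_introl eq_refl) E). simpl. apply le_n_S, IHl; auto.
  - destruct (Q a); simpl; [apply le_S|]; apply IHl; auto.
Qed.

Lemma count_strings_mono L P Q : (forall t, length t = L -> P t = true -> Q t = true) ->
  count_strings L P <= count_strings L Q.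
Proof. intros H. apply length_filter_mono. intros x Hx. apply H, in_all_strings; auto. Qed.

Lemma count_strings_ext L P Q : (forall t, length t = L -> P t = Q t) ->
  count_strings L P = count_strings L Q.
Proof.
  intros H. apply Nat.le_antisymm; apply count_strings_mono; intros t Ht E; rewrite H in *; auto.
Qed.

Lemma count_strings_false L : count_strings L (fun _ => false) = 0.
Proof. unfold count_strings. induction (all_strings L); simpl; auto. Qed.

Lemma count_strings_andb L b P : count_strings L (fun t => b && P t) = if b then count_strings L P else 0.
Proof. destruct b; simpl; [reflexivity | apply count_strings_false]. Qed.

Lemma count_strings_orb L P Q :
  count_strings L (fun t => P t || Q t) <= count_strings L P + count_strings L Q.
Proof. unfold count_strings. induction (all_strings L); simpl; auto. destruct (P a), (Q a); simpl; lia. Qed.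

Lemma count_strings_existsb {I} L (P : I -> bstring -> bool) is :
  count_strings L (fun t => existsb (fun i => P i t) is) <= list_sum (map (fun i => count_strings L (P i)) is).
Proof.
  induction is; simpl.
  - rewrite count_strings_false. lia.
  - etransitivity; [apply count_strings_orb|]. lia.
Qed.

Fixpoint agrees (c : nat -> option bool) (t : bstring) : bool :=
  match t with
  | [] => true
  | b :: t' => match c 0 with None => true | Some v => Bool.eqb b v end && agrees (fun j => c (S j)) t'
  end.

Definition n_assigned (L : nat) (c : nat -> option bool) :=
  sum_below L (fun j => match c j with None => 0 | Some _ => 1 end).

Lemma sum_below_shift L f : sum_below (S L) f = f 0 + sum_below L (fun j => f (S j)).
Proof. induction L; [simpl; lia|]. cbn [sum_below] in *. rewrite IHL. lia. Qed.

Lemma count_agrees L c : count_strings L (agrees c) * 2 ^ (n_assigned L c) = 2 ^ L.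
Proof.
  revert c; induction L; intros c.
  - rewrite count_strings_0. reflexivity.
  - rewrite count_strings_S. unfold n_assigned. rewrite sum_below_shift.
    fold (n_assigned L (fun j => c (S j))).
    simpl agrees. rewrite !count_strings_andb. specialize (IHL (fun j => c (S j))).
    destruct (c 0) as [[]|]; simpl; rewrite ?Nat.add_0_r; lia.
Qed.

Lemma agreesI t c :
  (forall j v, j < length t -> c j = Some v -> nth j t false = v) -> agrees c t = true.
Proof.
  revert c; induction t as [|b t IH]; intros c H; simpl; auto.
  apply andb_true_intro; split.
  - destruct (c 0) eqn:E; auto. specialize (H 0 b0 ltac:(simpl; lia) E). simpl in H.
    rewrite H. apply eqb_reflx.
  - apply IH. intros j v Hj Hc. apply (H (S j) v); simpl; auto. lia.
Qed.

Lemma count_strings_rescale P L0 L L' :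
  (forall t b, P t = true -> P (t ++ [b]) = true) ->
  (forall t b, L0 <= length t -> P (t ++ [b]) = P t) -> L0 <= L' ->
  count_strings L P * 2 ^ L' <= count_strings L' P * 2 ^ L.
Proof.
  intros Hup Hsettled HL.
  assert (Up : forall L d, count_strings L P * 2 ^ d <= count_strings (L + d) P).
  { intros L1 d; induction d; [rewrite Nat.add_0_r; simpl; lia|].
    rewrite Nat.add_succ_r, count_strings_snoc, Nat.pow_succ_r'.
    assert (count_strings (L1 + d) P <= count_strings (L1 + d) (fun t => P (t ++ [false])))
      by (apply count_strings_mono; auto).
    assert (count_strings (L1 + d) P <= count_strings (L1 + d) (fun t => P (t ++ [true])))
      by (apply count_strings_mono; auto).
    nia. }
  assert (Eq : forall L d, L0 <= L -> count_strings (L + d) P = count_strings L P * 2 ^ d).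
  { intros L1 d H1; induction d; [rewrite Nat.add_0_r; simpl; lia|].
    rewrite Nat.add_succ_r, count_strings_snoc, Nat.pow_succ_r'.
    rewrite !(count_strings_ext (L1 + d) (fun t => P (t ++ [_])) P) by (intros; apply Hsettled; lia).
    lia. }
  destruct (le_lt_dec L L').
  - replace L' with (L + (L' - L)) by lia. rewrite Nat.pow_add_r. specialize (Up L (L' - L)). nia.
  - replace L with (L' + (L - L')) by lia. rewrite Eq, Nat.pow_add_r by auto. lia.
Qed.

(** * Measures of finite sets of cylinders *)

Definition pow2_pos (k : nat) : positive := Pos.of_nat (2 ^ k).
Definition dyadic (a k : nat) : Q := Z.of_nat a # pow2_pos k.

Lemma pow2_pos_Z k : Zpos (pow2_pos k) = Z.of_nat (2 ^ k).
Proof.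
  unfold pow2_pos. rewrite <- positive_nat_Z, Nat2Pos.id; auto. apply Nat.pow_nonzero; lia.
Qed.

Lemma Zpow2_pos k : (2 ^ Z.of_nat k)%Z = Zpos (pow2_pos k).
Proof. rewrite pow2_pos_Z, Nat2Z.inj_pow. reflexivity. Qed.

Lemma dyadic_le a p b q : (dyadic a p <= dyadic b q)%Q <-> a * 2 ^ q <= b * 2 ^ p.
Proof. unfold dyadic, Qle. simpl. rewrite !pow2_pos_Z, <- !Nat2Z.inj_mul. lia. Qed.

Lemma pow2inv_dyadic k : pow2inv k == dyadic 1 k.
Proof. unfold pow2inv. rewrite Zpow2_pos. unfold dyadic, Qeq. simpl. lia. Qed.

Lemma dyadic_succ a k : (inject_Z (Z.of_nat a) * pow2inv k + pow2inv k == dyadic (a + 1) k)%Q.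
Proof.
  unfold pow2inv. rewrite Zpow2_pos. unfold dyadic, Qeq. simpl.
  rewrite !Pos2Z.inj_mul, Nat2Z.inj_add. ring.
Qed.

Lemma dyadic_pred a k : 1 <= a -> (inject_Z (Z.of_nat a) * pow2inv k - pow2inv k == dyadic (a - 1) k)%Q.
Proof.
  intros H. unfold pow2inv. rewrite Zpow2_pos. unfold dyadic, Qeq. simpl.
  rewrite !Pos2Z.inj_mul, Nat2Z.inj_sub by lia. rewrite <- (Pos2Z.opp_pos (pow2_pos k)).
  simpl Z.of_nat. ring.
Qed.

Definition maxlen (F : list bstring) := fold_right (fun s m => Nat.max (length s) m) 0 F.
Definition covered_by (F : list bstring) (t : bstring) := existsb (fun s => is_prefix s t) F.

Lemma mu_fin_dyadic F : mu_fin F == dyadic (count_strings (maxlen F) (covered_by F)) (maxlen F).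
Proof. unfold mu_fin. fold (maxlen F). rewrite Zpow2_pos. unfold dyadic. rewrite Qmake_Qdiv. reflexivity. Qed.

Lemma is_prefix_app s t : is_prefix s t = true -> exists u, t = s ++ u.
Proof.
  revert t; induction s as [|a s IH]; intros t H; simpl in *; [exists t; auto|].
  destruct t as [|b t]; [discriminate|]. apply andb_prop in H as [H1 H2].
  apply eqb_prop in H1; subst. destruct (IH t H2) as [u ->]. exists u; auto.
Qed.

Lemma is_prefix_refl s : is_prefix s s = true.
Proof. induction s; simpl; auto. rewrite eqb_reflx; auto. Qed.

Lemma is_prefix_eq s t : is_prefix s t = true -> length s = length t -> s = t.
Proof.
  intros H E. destruct (is_prefix_app s t H) as [u ->]. rewrite length_app in E.
  destruct u; simpl in *; [rewrite app_nil_r; auto | lia].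
Qed.

Lemma maxlen_const F L : F <> [] -> (forall s, In s F -> length s = L) -> maxlen F = L.
Proof.
  induction F as [|s F IH]; intros Hne H; [congruence|]. cbn [maxlen fold_right].
  fold (maxlen F). rewrite (H s) by (simpl; auto).
  destruct F as [|s' F']; [simpl; lia|].
  rewrite IH; [lia | congruence | intros; apply H; simpl; auto].
Qed.

Lemma mu_fin_strings L P : mu_fin (filter P (all_strings L)) == dyadic (count_strings L P) L.
Proof.
  rewrite mu_fin_dyadic. set (F := filter P (all_strings L)).
  assert (Hlen : forall s, In s F -> length s = L)
    by (intros s Hs; apply filter_In in Hs as [Hs _]; apply in_all_strings; auto).
  destruct F as [|s0 F0] eqn:EF.
  - assert (count_strings L P = 0) by (unfold count_strings; fold F; rewrite EF; auto).
    simpl maxlen. rewrite count_strings_false, H. reflexivity.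
  - rewrite <- EF in *. rewrite (maxlen_const F L) by (auto; rewrite EF; congruence).
    rewrite (count_strings_ext L (covered_by F) P); [reflexivity|].
    intros t Ht. destruct (P t) eqn:E.
    + apply existsb_exists. exists t. split; [|apply is_prefix_refl].
      apply filter_In. split; auto. apply in_all_strings; auto.
    + destruct (covered_by F t) eqn:E2; auto.
      apply existsb_exists in E2 as [s [Hs Hp]].
      rewrite (is_prefix_eq s t Hp) in Hs by (rewrite Hlen, Ht; auto).
      apply filter_In in Hs as [_ Hs]. congruence.
Qed.

(** * Schnorr tests from computable families of requirements *)

(* Requirement (n, i), when active, is met by the strings of length at least
   [req_len n i] that carry the bit [req_val n i j] at every masked position
   [j < req_len n i].  At least n + i + 1 positions are masked, so the
   requirement spans a class of measure at most 2^-(n+i+1). *)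
Record req_family := {
  req_active : nat -> nat -> bool;
  req_len : nat -> nat -> nat;
  req_mask : nat -> nat -> nat -> bool;
  req_val : nat -> nat -> nat -> bool;
  rreq_active : rfun;
  rreq_len : rfun;
  rreq_mask : rfun;
  rreq_val : rfun;
  rreq_activeE : forall n i, rval rreq_active [n; i] = if req_active n i then 1 else 0;
  rreq_lenE : forall n i, rval rreq_len [n; i] = req_len n i;
  rreq_maskE : forall n i j, rval rreq_mask [n; i; j] = if req_mask n i j then 1 else 0;
  rreq_valE : forall n i j, rval rreq_val [n; i; j] = if req_val n i j then 1 else 0;
  req_mask_large : forall n i, req_active n i = true ->
     n + i + 1 <= sum_below (req_len n i) (fun j => if req_mask n i j then 1 else 0) }.

Lemma sum_below_le1 m f : (forall j, j < m -> f j <= 1) -> sum_below m f <= m.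
Proof.
  induction m; simpl; intros H; auto.
  assert (sum_below m f <= m) by (apply IHm; intros; apply H; lia).
  assert (f m <= 1) by (apply H; lia). lia.
Qed.

Lemma sum_below_forallb m (P : nat -> bool) :
  (sum_below m (fun j => if P j then 1 else 0) =? m) = forallb P (seq 0 m).
Proof.
  induction m; [reflexivity|]. cbn [sum_below]. rewrite seq_S, forallb_app.
  cbn [forallb]. change (0 + m) with m. rewrite andb_true_r, <- IHm.
  assert (H : sum_below m (fun j => if P j then 1 else 0) <= m)
    by (apply sum_below_le1; intros x _; destruct (P x); auto).
  revert H. generalize (sum_below m (fun j => if P j then 1 else 0)). intros T H.
  destruct (P m); rewrite ?Nat.add_1_r, ?Nat.add_0_r, ?andb_true_r, ?andb_false_r; simpl.
  - reflexivity.
  - destruct (Nat.eqb_spec T (S m)); auto; lia.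
Qed.

Lemma sum_below_existsb k (b : nat -> bool) :
  (1 <=? sum_below k (fun i => if b i then 1 else 0)) = existsb b (seq 0 k).
Proof.
  induction k; [reflexivity|]. cbn [sum_below]. rewrite seq_S, existsb_app. cbn [existsb].
  change (0 + k) with k. rewrite orb_false_r, <- IHk.
  destruct (sum_below k (fun i => if b i then 1 else 0)), (b k); reflexivity.
Qed.

Lemma sum_below_trunc M (b : nat -> bool) L :
  sum_below L (fun j => if (j <? M) && b j then 1 else 0) =
  sum_below (Nat.min L M) (fun j => if b j then 1 else 0).
Proof.
  induction L; [reflexivity|]. cbn [sum_below]. rewrite IHL.
  destruct (Nat.ltb_spec L M).
  - replace (Nat.min (S L) M) with (S (Nat.min L M)) by lia. cbn [sum_below].
    replace (Nat.min L M) with L by lia. reflexivity.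
  - replace (Nat.min (S L) M) with (Nat.min L M) by lia. simpl. lia.
Qed.

Lemma forallb_ext_in {A} (f g : A -> bool) l : (forall x, In x l -> f x = g x) -> forallb f l = forallb g l.
Proof. induction l; simpl; intros H; auto. rewrite H, IHl; auto. Qed.

Lemma existsb_ext_in {A} (f g : A -> bool) l : (forall x, In x l -> f x = g x) -> existsb f l = existsb g l.
Proof. induction l; simpl; intros H; auto. rewrite H, IHl; auto. Qed.

Section RequirementTest.

Variable p : req_family.

Definition req_sat (n i : nat) (s : bstring) : bool :=
  req_active p n i && (req_len p n i <=? length s) &&
  forallb (fun j => implb (req_mask p n i j) (Bool.eqb (nth j s false) (req_val p n i j)))
    (seq 0 (req_len p n i)).

Definition req_test (n : nat) (s : bstring) : Prop := exists i, req_sat n i s = true.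

(* [rreq_sat [i; n; code_str s]] decides [req_sat n i s] *)
Definition rreq_sat : rfun :=
  let len := rcomp (rreq_len p) [rproj 1; rproj 0] in
  let ok := rcomp rifz [rcomp (rreq_mask p) [rproj 2; rproj 1; rproj 0]; rconst 1;
              rcomp reqb [rcomp rcode_bit [rproj 3; rproj 0]; rcomp (rreq_val p) [rproj 2; rproj 1; rproj 0]]] in
  rcomp rmul [rcomp (rreq_active p) [rproj 1; rproj 0];
    rcomp rmul [rcomp rleb [len; rcomp rcode_length [rproj 2]];
                rcomp reqb [rsum ok len [rproj 0; rproj 1; rproj 2]; len]]].

Lemma rreq_sat_str i n s : rval rreq_sat [i; n; code_str s] = if req_sat n i s then 1 else 0.
Proof.
  unfold rreq_sat, req_sat.
  cbn [rval rcomp map rsum rfun_ext nth rproj rmul rleb rcode_length reqb rifz rcode_bit rconst rsucc rzero].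
  rewrite rreq_activeE, rreq_lenE, code_length_str.
  rewrite (sum_below_ext _ _
    (fun j => if implb (req_mask p n i j) (Bool.eqb (nth j s false) (req_val p n i j)) then 1 else 0)).
  - rewrite sum_below_forallb.
    destruct (req_active p n i), (req_len p n i <=? length s), (forallb _ _); reflexivity.
  - intros j _. rewrite rreq_maskE, rreq_valE, code_bit_str.
    destruct (req_mask p n i j), (nth j s false), (req_val p n i j); reflexivity.
Qed.

Lemma count_req_sat n i L : count_strings L (req_sat n i) * 2 ^ (n + i + 1) <= 2 ^ L.
Proof.
  destruct (req_active p n i) eqn:Ea.
  2:{ rewrite (count_strings_ext L _ (fun _ => false)), count_strings_false; [simpl; lia|].
      intros t _. unfold req_sat. rewrite Ea. reflexivity. }
  destruct (le_lt_dec (req_len p n i) L) as [HM|HM].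
  2:{ rewrite (count_strings_ext L _ (fun _ => false)), count_strings_false; [simpl; lia|].
      intros t Ht. unfold req_sat. destruct (Nat.leb_spec (req_len p n i) (length t)); [lia|].
      rewrite andb_false_r. reflexivity. }
  set (M := req_len p n i).
  set (c := fun j => if (j <? M) && req_mask p n i j then Some (req_val p n i j) else None).
  assert (Hagree : count_strings L (req_sat n i) <= count_strings L (agrees c)).
  { apply count_strings_mono. intros t _ Hs. apply agreesI. intros j v Hj Hc.
    unfold c in Hc. destruct (Nat.ltb_spec j M); [|discriminate].
    destruct (req_mask p n i j) eqn:Em; [|discriminate]. injection Hc as <-.
    unfold req_sat in Hs. apply andb_prop in Hs as [_ Hs].
    rewrite forallb_forall in Hs. specialize (Hs j ltac:(apply in_seq; lia)).
    rewrite Em in Hs. apply eqb_prop in Hs. auto. }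
  assert (Hassigned : n_assigned L c = sum_below M (fun j => if req_mask p n i j then 1 else 0)).
  { unfold n_assigned, c.
    rewrite (sum_below_ext _ _ (fun j => if (j <? M) && req_mask p n i j then 1 else 0))
      by (intros j _; destruct ((j <? M) && req_mask p n i j); reflexivity).
    rewrite sum_below_trunc. f_equal. lia. }
  pose proof (req_mask_large p n i Ea) as Hlarge. change (req_len p n i) with M in Hlarge.
  pose proof (count_agrees L c) as Hcount.
  rewrite Hassigned in Hcount. rewrite <- Hcount.
  apply Nat.mul_le_mono; auto. apply Nat.pow_le_mono_r; lia.
Qed.

Lemma count_req_sat_range n L k d :
  list_sum (map (fun i => count_strings L (req_sat n i)) (seq k d)) * 2 ^ (n + k) <= 2 ^ L.
Proof.
  revert k; induction d; intros k; simpl; [lia|].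
  specialize (IHd (S k)). pose proof (count_req_sat n k L) as H.
  rewrite Nat.add_succ_r, Nat.pow_succ_r' in IHd.
  rewrite Nat.add_1_r, Nat.pow_succ_r' in H. nia.
Qed.

Lemma req_sat_app n i t u : req_sat n i t = true -> req_sat n i (t ++ u) = true.
Proof.
  unfold req_sat. intros H. apply andb_prop in H as [H H3]. apply andb_prop in H as [H1 H2].
  apply Nat.leb_le in H2. rewrite H1, length_app.
  replace (req_len p n i <=? length t + length u) with true by (symmetry; apply Nat.leb_le; lia).
  simpl. rewrite forallb_forall in *. intros j Hj. specialize (H3 j Hj). apply in_seq in Hj.
  rewrite app_nth1 by lia. auto.
Qed.

Lemma req_sat_snoc n i t b : req_len p n i <= length t -> req_sat n i (t ++ [b]) = req_sat n i t.
Proof.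
  intros H. unfold req_sat. rewrite length_app.
  replace (req_len p n i <=? length t + length [b]) with true by (symmetry; apply Nat.leb_le; lia).
  replace (req_len p n i <=? length t) with true by (symmetry; apply Nat.leb_le; lia).
  f_equal. apply forallb_ext_in. intros j Hj. apply in_seq in Hj.
  rewrite app_nth1 by lia. reflexivity.
Qed.

Definition req_sat_below (n k : nat) (t : bstring) := existsb (fun i => req_sat n i t) (seq 0 k).
Definition req_len_total (n k : nat) := sum_below k (req_len p n).
Definition req_count (n k : nat) := count_strings (req_len_total n k + k) (req_sat_below n k).

(* The first k requirements are settled on strings of length S := req_len_total n k;
   their class has measure in [(g - 1)/2^k, g/2^k) for g := req_approx n k, and the
   remaining requirements add at most 2^-(n+k). *)
Definition req_approx (n k : nat) := req_count n k / 2 ^ (req_len_total n k) + 1.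

Lemma req_len_le_total n k i : i < k -> req_len p n i <= req_len_total n k.
Proof.
  unfold req_len_total. induction k; intros H; [lia|]. cbn [sum_below].
  destruct (Nat.eq_dec i k); subst; [lia|]. specialize (IHk ltac:(lia)). lia.
Qed.

Lemma req_sat_below_app n k t b : req_sat_below n k t = true -> req_sat_below n k (t ++ [b]) = true.
Proof.
  unfold req_sat_below. rewrite !existsb_exists. intros [i [Hi Hs]].
  exists i. split; auto. apply req_sat_app; auto.
Qed.

Lemma req_sat_below_snoc n k t b :
  req_len_total n k <= length t -> req_sat_below n k (t ++ [b]) = req_sat_below n k t.
Proof.
  intros H. apply existsb_ext_in. intros i Hi. apply in_seq in Hi.
  apply req_sat_snoc. pose proof (req_len_le_total n k i ltac:(lia)). lia.
Qed.

Lemma count_finite_sub n F : finite_sub F (req_test n) ->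
  exists B0, forall B, B0 <= B ->
    count_strings (maxlen F) (covered_by F) <= count_strings (maxlen F) (req_sat_below n B).
Proof.
  intros HF.
  assert (Hw : exists B0, forall s, In s F -> exists i, i < B0 /\ req_sat n i s = true).
  { clear -HF. induction F as [|s F IH]; [exists 0; intros s []|].
    destruct IH as [B HB]; [intros x Hx; apply HF; simpl; auto|].
    destruct (HF s (or_introl eq_refl)) as [i Hi].
    exists (Nat.max B (S i)). intros x [<-|Hx].
    + exists i; split; auto; lia.
    + destruct (HB x Hx) as [j [Hj Hs]]. exists j; split; auto; lia. }
  destruct Hw as [B0 HB0]. exists B0. intros B HB.
  apply count_strings_mono. intros t _ Ht. apply existsb_exists in Ht as [s [Hs Hp]].
  destruct (HB0 s Hs) as [i [Hi Hsat]]. destruct (is_prefix_app s t Hp) as [u ->].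
  apply existsb_exists. exists i. split; [apply in_seq; lia | apply req_sat_app; auto].
Qed.

Lemma count_req_sat_below n B L : count_strings L (req_sat_below n B) * 2 ^ n <= 2 ^ L.
Proof.
  pose proof (count_strings_existsb L (req_sat n) (seq 0 B)) as Hunion.
  change (fun t => existsb _ (seq 0 B)) with (req_sat_below n B) in Hunion.
  pose proof (count_req_sat_range n L 0 B). rewrite Nat.add_0_r in *. nia.
Qed.

Lemma count_req_sat_below_split n k B L : k <= B ->
  count_strings L (req_sat_below n B) * 2 ^ k <= count_strings L (req_sat_below n k) * 2 ^ k + 2 ^ L.
Proof.
  intros HB. replace B with (k + (B - k)) by lia.
  set (T := list_sum (map (fun i => count_strings L (req_sat n i)) (seq k (B - k)))).
  assert (Hsplit : count_strings L (req_sat_below n (k + (B - k))) <= count_strings L (req_sat_below n k) + T).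
  { rewrite (count_strings_ext L _
      (fun t => req_sat_below n k t || existsb (fun i => req_sat n i t) (seq k (B - k))))
      by (intros t _; unfold req_sat_below; rewrite seq_app, existsb_app; reflexivity).
    etransitivity; [apply count_strings_orb|]. apply Nat.add_le_mono_l, count_strings_existsb. }
  pose proof (count_req_sat_range n L k (B - k)) as Htail. fold T in Htail.
  assert (T * 2 ^ k <= T * 2 ^ (n + k)) by (apply Nat.mul_le_mono_l, Nat.pow_le_mono_r; lia).
  nia.
Qed.

Lemma count_req_sat_below_lt n k L :
  count_strings L (req_sat_below n k) * 2 ^ k < req_approx n k * 2 ^ L.
Proof.
  unfold req_approx, req_count. set (S := req_len_total n k).
  set (C := count_strings (S + k) (req_sat_below n k)).
  pose proof (count_strings_rescale (req_sat_below n k) S L (S + k)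
    (req_sat_below_app n k) (req_sat_below_snoc n k) ltac:(lia)) as Hscale.
  fold C in Hscale. rewrite Nat.pow_add_r in Hscale.
  assert (HS : 0 < 2 ^ S) by (apply Nat.neq_0_lt_0, Nat.pow_nonzero; lia).
  assert (HC : C < (C / 2 ^ S + 1) * 2 ^ S).
  { pose proof (Nat.div_mod C (2 ^ S) ltac:(lia)). pose proof (Nat.mod_upper_bound C (2 ^ S) ltac:(lia)). nia. }
  assert (0 < 2 ^ L) by (apply Nat.neq_0_lt_0, Nat.pow_nonzero; lia).
  apply (Nat.mul_lt_mono_pos_r (2 ^ S)); auto. nia.
Qed.

Lemma mu_req_test n : mu_le (req_test n) (pow2inv n).
Proof.
  intros F HF. rewrite mu_fin_dyadic, pow2inv_dyadic. apply dyadic_le.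
  destruct (count_finite_sub n F HF) as [B HB].
  pose proof (HB B (le_n B)). pose proof (count_req_sat_below n B (maxlen F)). nia.
Qed.

Lemma mu_req_test_upper n k : mu_le (req_test n) (dyadic (req_approx n k + 1) k).
Proof.
  intros F HF. rewrite mu_fin_dyadic. apply dyadic_le.
  destruct (count_finite_sub n F HF) as [B0 HB0].
  pose proof (HB0 (Nat.max B0 k) ltac:(lia)).
  pose proof (count_req_sat_below_split n k (Nat.max B0 k) (maxlen F) ltac:(lia)).
  pose proof (count_req_sat_below_lt n k (maxlen F)). nia.
Qed.

Lemma mu_req_test_lower n k : exists F, finite_sub F (req_test n) /\
   (dyadic (req_approx n k - 1) k <= mu_fin F)%Q.
Proof.
  set (L := req_len_total n k + k).
  exists (filter (req_sat_below n k) (all_strings L)). split.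
  - intros s Hs. apply filter_In in Hs as [_ Hs].
    apply existsb_exists in Hs as [i [_ Hi]]. exists i; auto.
  - rewrite mu_fin_strings. apply dyadic_le. unfold req_approx, req_count. fold L.
    rewrite Nat.add_sub. unfold L at 2. rewrite Nat.pow_add_r, Nat.mul_assoc.
    apply Nat.mul_le_mono_r. rewrite Nat.mul_comm. apply Nat.Div0.mul_div_le.
Qed.

Lemma sum_below_add m a b : sum_below m (fun u => a u + b u) = sum_below m a + sum_below m b.
Proof. induction m; simpl; auto. rewrite IHm. lia. Qed.

Lemma sum_below_double m h : sum_below (2 * m) h = sum_below m (fun u => h (2 * u) + h (2 * u + 1)).
Proof.
  induction m; [reflexivity|]. replace (2 * S m) with (S (S (2 * m))) by lia.
  cbn [sum_below]. rewrite IHm. replace (S (2 * m)) with (2 * m + 1) by lia. lia.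
Qed.

(* the strings of length L have the codes 2^L - 1, ..., 2^(L+1) - 2 *)
Lemma sum_all_strings L f :
  list_sum (map (fun t => f (code_str t)) (all_strings L)) = sum_below (2 ^ L) (fun y => f (2 ^ L - 1 + y)).
Proof.
  revert f; induction L; intros f; [simpl; lia|].
  cbn [all_strings]. rewrite map_app, list_sum_app, !map_map. cbn [code_str].
  unfold bstring in IHL. rewrite (IHL (fun x => f (2 * x + 1))), (IHL (fun x => f (2 * x + 2))).
  rewrite Nat.pow_succ_r', sum_below_double, <- sum_below_add. apply sum_below_ext. intros u _.
  assert (1 <= 2 ^ L) by (apply Nat.neq_0_lt_0, Nat.pow_nonzero; lia).
  f_equal; f_equal; lia.
Qed.

Lemma count_strings_sum L P : count_strings L P = list_sum (map (fun t => if P t then 1 else 0) (all_strings L)).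
Proof. unfold count_strings. induction (all_strings L); simpl; auto. destruct (P a); simpl; lia. Qed.

Lemma req_count_sum n k : req_count n k = sum_below (2 ^ (req_len_total n k + k))
  (fun y => if 1 <=? sum_below k (fun i => rval rreq_sat [i; n; 2 ^ (req_len_total n k + k) - 1 + y])
            then 1 else 0).
Proof.
  unfold req_count. rewrite count_strings_sum, <- (sum_all_strings _
    (fun x => if 1 <=? sum_below k (fun i => rval rreq_sat [i; n; x]) then 1 else 0)).
  f_equal. apply map_ext. intros t.
  rewrite (sum_below_ext k _ (fun i => if req_sat n i t then 1 else 0)) by (intros; apply rreq_sat_str).
  rewrite sum_below_existsb. reflexivity.
Qed.

Definition rreq_len_total : rfun.
Proof.
  refine (rfun_ext (rsum (rcomp (rreq_len p) [rproj 1; rproj 0]) (rproj 1) [rproj 0])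
    (fun a => req_len_total (a##0) (a##1)) _).
  intro a. cbn [rval rfun_ext rsum rcomp map rproj nth]. apply sum_below_ext. intros. apply rreq_lenE.
Defined.

(* [rreq_sat_below_code [y; n; k; L]] tests the string with code 2^L - 1 + y *)
Definition rreq_sat_below_code : rfun.
Proof.
  refine (rfun_ext (rcomp rleb [rconst 1; rsum (rcomp rreq_sat [rproj 0; rproj 2;
              rcomp radd [rcomp rsub [rcomp rpow2 [rproj 4]; rconst 1]; rproj 1]])
              (rproj 2) [rproj 0; rproj 1; rproj 2; rproj 3]])
     (fun a => if 1 <=? sum_below (a##2) (fun i => rval rreq_sat [i; a##1; 2 ^ (a##3) - 1 + a##0])
               then 1 else 0) _).
  intro a. reflexivity.
Defined.

Definition rreq_approx : rfun.
Proof.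
  refine (rfun_ext (rcomp radd [rcomp rdiv
      [rsum rreq_sat_below_code (rcomp rpow2 [rcomp radd [rreq_len_total; rproj 1]])
            [rproj 0; rproj 1; rcomp radd [rreq_len_total; rproj 1]];
       rcomp rpow2 [rreq_len_total]]; rconst 1])
     (fun a => req_approx (a##0) (a##1)) _).
  intro a. unfold req_approx. rewrite req_count_sum.
  cbn [rval rfun_ext rcomp map rsum rproj nth radd rdiv rpow2 rconst rsucc rzero rreq_sat_below_code rreq_len_total].
  rewrite div_count_div by (apply Nat.neq_0_lt_0, Nat.pow_nonzero; lia). reflexivity.
Defined.

Lemma least_witness (P : nat -> bool) n : P n = true ->
  exists m, P m = true /\ forall j, j < m -> P j = false.
Proof.
  induction n as [n IH] using (well_founded_induction lt_wf). intros H.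
  destruct (existsb P (seq 0 n)) eqn:E.
  - apply existsb_exists in E as [j [Hj Pj]]. apply in_seq in Hj. apply (IH j); auto. lia.
  - exists n; split; auto. intros j Hj. destruct (P j) eqn:Pj; auto.
    rewrite <- E. symmetry. apply existsb_exists. exists j; split; auto. apply in_seq; lia.
Qed.

(* the test set at level n is the domain of the search for a satisfied requirement *)
Lemma req_test_ce : unif_ce req_test.
Proof.
  set (unsat := rcomp rsub [rconst 1; rcomp rreq_sat [rproj 0; rproj 1; rproj 2]]).
  assert (Hunsat : forall i n s, rval unsat [i; n; code_str s] = if req_sat n i s then 0 else 1).
  { intros i n s. unfold unsat. cbn [rval rcomp map rproj nth rsub rconst rsucc rzero rfun_ext].
    rewrite rreq_sat_str. destruct (req_sat n i s); reflexivity. }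
  exists (cMu (rcode unsat)). intros n s. split.
  - intros [i Hi]. destruct (least_witness (fun i => req_sat n i s) i Hi) as [m [Hm Hlt]].
    exists m. constructor.
    + pose proof (rcodeP unsat [m; n; code_str s]) as E. rewrite Hunsat, Hm in E. exact E.
    + intros j Hj. exists 0. pose proof (rcodeP unsat [j; n; code_str s]) as E.
      rewrite Hunsat, (Hlt j Hj) in E. exact E.
  - intros [y Hy]. inversion Hy as [| | | | | |f a m E L]; subst.
    pose proof (eval_deterministic _ _ _ _ E (rcodeP unsat [y; n; code_str s])) as Eq.
    rewrite Hunsat in Eq. exists y. destruct (req_sat n y s); auto. discriminate.
Qed.

Theorem req_test_Schnorr : SchnorrTest req_test.
Proof.
  split; [apply req_test_ce|]. split; [apply mu_req_test|].
  exists req_approx. split.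
  - exists (rcode rreq_approx). intros x y. apply (rcodeP rreq_approx [x; y]).
  - intros n k. split.
    + intros F HF. rewrite dyadic_succ. apply mu_req_test_upper; auto.
    + destruct (mu_req_test_lower n k) as [F [HF Hl]]. exists F. split; auto.
      rewrite dyadic_pred by (unfold req_approx; lia). auto.
Qed.

End RequirementTest.

Lemma length_prefix A m : length (prefix A m) = m.
Proof. unfold prefix. rewrite length_map, length_seq. auto. Qed.

Lemma nth_prefix A m j : j < m -> nth j (prefix A m) false = A j.
Proof.
  intros H. unfold prefix. rewrite nth_indep with (d' := A 0) by (rewrite length_map, length_seq; auto).
  rewrite map_nth, seq_nth; auto.
Qed.

Lemma req_sat_prefix p n i A :
  req_active p n i = true ->
  (forall j, j < req_len p n i -> req_mask p n i j = true -> A j = req_val p n i j) ->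
  req_sat p n i (prefix A (req_len p n i)) = true.
Proof.
  intros Hact HA. unfold req_sat. rewrite Hact, length_prefix, Nat.leb_refl. simpl.
  apply forallb_forall. intros j Hj. apply in_seq in Hj.
  destruct (req_mask p n i j) eqn:Em; simpl; auto.
  rewrite nth_prefix, HA by (auto; lia). apply eqb_reflx.
Qed.

(** * Infinitude *)

(* requirement (n, i): zeros at the positions i, ..., 2i + n *)
Definition zero_block_reqs : req_family.
Proof.
  refine (Build_req_family (fun _ _ => true) (fun n i => i + i + n + 1) (fun n i j => i <=? j)
    (fun _ _ _ => false) (rconst 1)
    (rcomp radd [rcomp radd [rcomp radd [rproj 1; rproj 1]; rproj 0]; rconst 1])
    (rcomp rleb [rproj 1; rproj 2]) rzero
    (fun _ _ => eq_refl) (fun _ _ => eq_refl) (fun _ _ _ => eq_refl) (fun _ _ _ => eq_refl) _).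
  intros n i _. replace (sum_below _ _) with (i + i + n + 1 - i); [lia|].
  induction (i + i + n + 1) as [|m IHm]; [reflexivity|]. cbn [sum_below]. rewrite <- IHm.
  destruct (Nat.leb_spec i m); lia.
Defined.

Lemma Schnorr_random_infinite A : SchnorrRandom A -> set_infinite A.
Proof.
  intros HR m.
  destruct (HR _ (req_test_Schnorr zero_block_reqs)) as [n Hn].
  destruct (existsb (fun j => (m <=? j) && A j) (seq 0 (m + m + n + 1))) eqn:E.
  - apply existsb_exists in E as [j [_ Hj]]. apply andb_prop in Hj as [Hmj Hj].
    exists j. split; auto. apply Nat.leb_le; auto.
  - exfalso. apply (Hn (m + m + n + 1)). exists m. apply req_sat_prefix; auto.
    intros j Hj Hmj. cbn in Hj, Hmj |- *. destruct (A j) eqn:HA; auto.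
    rewrite <- E. symmetry. apply existsb_exists. exists j. rewrite Hmj, HA.
    split; auto. apply in_seq. lia.
Qed.

(** * Canonical immunity *)

Lemma rfun_of_recursive1 F : recursive1 F -> exists f : rfun, forall x, rval f [x] = F x.
Proof.
  intros [c Hc]. unshelve eexists (RFun (cComp c [cProj 0]) (fun a => F (a##0)) _); [|reflexivity].
  intro a. econstructor; [repeat constructor | apply Hc].
Qed.

Lemma rfun_of_recursive2 F : recursive2 F -> exists f : rfun, forall x y, rval f [x; y] = F x y.
Proof.
  intros [c Hc]. unshelve eexists (RFun (cComp c [cProj 0; cProj 1]) (fun a => F (a##0) (a##1)) _);
    [|reflexivity].
  intro a. econstructor; [repeat constructor | apply Hc].
Qed.

Definition is_least_zero (f : rfun) (a : list nat) (m : nat) : bool :=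
  (rval f (m :: a) =? 0) && forallb (fun j => negb (rval f (j :: a) =? 0)) (seq 0 m).

Lemma is_least_zero_exists f a : (exists y, rval f (y :: a) = 0) -> exists m, is_least_zero f a m = true.
Proof.
  intros [y Hy]. destruct (least_witness (fun y => rval f (y :: a) =? 0) y) as [m [Hm Hlt]].
  - apply Nat.eqb_eq; auto.
  - exists m. unfold is_least_zero. rewrite Hm. simpl. apply forallb_forall. intros j Hj.
    apply in_seq in Hj. rewrite Hlt by lia. reflexivity.
Qed.

Definition rmin (f : rfun) (H : forall a, exists y, rval f (y :: a) = 0) : rfun.
Proof.
  refine (RFun (cMu (rcode f))
    (fun a => proj1_sig (constructive_indefinite_ground_description_nat _
       (fun m => bool_dec (is_least_zero f a m) true) (is_least_zero_exists f a (H a)))) _).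
  intro a. destruct constructive_indefinite_ground_description_nat as [m Hm]; simpl.
  apply andb_prop in Hm as [H1 H2]. apply Nat.eqb_eq in H1. constructor.
  - rewrite <- H1. apply rcodeP.
  - intros j Hj. rewrite forallb_forall in H2. specialize (H2 j ltac:(apply in_seq; lia)).
    destruct (rval f (j :: a)) eqn:E; [discriminate|]. exists n. rewrite <- E. apply rcodeP.
Defined.

Lemma rmin_zero f H a : rval f (rval (rmin f H) a :: a) = 0.
Proof.
  simpl. destruct constructive_indefinite_ground_description_nat as [m Hm]; simpl.
  apply andb_prop in Hm as [H1 _]. apply Nat.eqb_eq; auto.
Qed.

Lemma length_NoDup_same (l l' : list nat) : NoDup l -> NoDup l' -> (forall x, In x l <-> In x l') ->
  length l = length l'.
Proof.
  intros H1 H2 H. apply Nat.le_antisymm; apply NoDup_incl_length; auto; intros x Hx; apply H; auto.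
Qed.

Lemma sum_below_filter m (P : nat -> bool) :
  sum_below m (fun x => if P x then 1 else 0) = length (filter P (seq 0 m)).
Proof.
  induction m; [reflexivity|]. cbn [sum_below]. rewrite seq_S, filter_app, length_app, IHm. simpl.
  destruct (P m); reflexivity.
Qed.

Lemma canonical_numbering_rfuns D : canonical_numbering D ->
  exists (card : nat -> nat) (rD rcard rbound : rfun),
    (forall e x, rval rD [e; x] = if D e x then 1 else 0) /\
    (forall e, rval rcard [e] = card e) /\
    (forall e, sum_below (rval rbound [e]) (fun x => if D e x then 1 else 0) = card e) /\
    (forall e l, NoDup l -> (forall x, D e x = true <-> In x l) -> length l = card e).
Proof.
  intros [[card [Hcard Hlist]] [HD _]].
  destruct (rfun_of_recursive1 card Hcard) as [rcard Ercard].
  destruct (rfun_of_recursive2 _ HD) as [rD ErD].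
  assert (Hlen : forall e l, NoDup l -> (forall x, D e x = true <-> In x l) -> length l = card e).
  { intros e l Hl HlD. destruct (Hlist e) as [l' [Hl' [<- HlD']]].
    apply length_NoDup_same; auto. intros x. rewrite <- HlD, HlD'. tauto. }
  (* the sum over x < M of [x ∈ D_e] reaches card e exactly when M bounds D_e *)
  set (notyet := rcomp rsub [rconst 1; rcomp reqb [rsum (rcomp rD [rproj 1; rproj 0]) (rproj 0) [rproj 1];
                                                   rcomp rcard [rproj 1]]]).
  assert (Enotyet : forall M e,
    rval notyet [M; e] = if sum_below M (fun x => if D e x then 1 else 0) =? card e then 0 else 1).
  { intros M e. unfold notyet. cbn [rval rcomp map rsum rproj nth rsub reqb rconst rsucc rzero rfun_ext].
    rewrite Ercard, (sum_below_ext _ _ (fun x => if D e x then 1 else 0)) by (intros; apply ErD).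
    destruct (_ =? _); reflexivity. }
  assert (Hex : forall a, exists y, rval notyet (y :: a) = 0).
  { intros a. destruct (Hlist (a##0)) as [l [Hnd [Hl Hin]]].
    exists (S (list_max l)). change (rval notyet (S (list_max l) :: a)) with (rval notyet [S (list_max l); a##0]).
    rewrite Enotyet, sum_below_filter, <- Hl, (length_NoDup_same _ l), Nat.eqb_refl; auto.
    - apply NoDup_filter, seq_NoDup.
    - intros x. rewrite filter_In, in_seq, <- Hin. split; [tauto|]. intros Hx. split; auto.
      pose proof (proj1 (list_max_le l _) (le_n _)) as Hmax. rewrite Forall_forall in Hmax.
      specialize (Hmax x (proj1 (Hin x) Hx)). lia. }
  exists card, rD, rcard, (rmin notyet Hex). repeat split; auto.
  intros e. pose proof (rmin_zero notyet Hex [e]) as Z. rewrite Enotyet in Z.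
  destruct (Nat.eqb_spec (sum_below (rval (rmin notyet Hex) [e]) (fun x => if D e x then 1 else 0)) (card e));
    [auto | discriminate].
Qed.

Section Immunity.

Variables (D : nat -> nat -> bool) (card : nat -> nat) (rD rcard rbound : rfun).
Hypothesis rDE : forall e x, rval rD [e; x] = if D e x then 1 else 0.
Hypothesis rcardE : forall e, rval rcard [e] = card e.
Hypothesis rbound_spec : forall e, sum_below (rval rbound [e]) (fun x => if D e x then 1 else 0) = card e.

(* requirement (n, i): D_e ⊆ A and |D_e| > e, for e = n + i *)
Definition canonical_reqs : req_family.
Proof.
  set (e := rcomp radd [rproj 0; rproj 1]).
  refine (Build_req_family (fun n i => S (n + i) <=? card (n + i)) (fun n i => rval rbound [n + i])
    (fun n i j => D (n + i) j) (fun _ _ _ => true)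
    (rcomp rleb [rcomp rsucc [e]; rcomp rcard [e]]) (rcomp rbound [e]) (rcomp rD [e; rproj 2]) (rconst 1)
    _ _ _ (fun _ _ _ => eq_refl) _); intros n i; simpl.
  - rewrite rcardE. reflexivity.
  - reflexivity.
  - intros j. apply rDE.
  - rewrite rbound_spec. intros H. apply (Nat.leb_le (S (n + i))) in H. lia.
Defined.

Lemma canonical_reqs_escape A n :
  (forall m, ~ req_test canonical_reqs n (prefix A m)) ->
  forall e, n <= e -> (forall x, D e x = true -> A x = true) -> card e <= e.
Proof.
  intros Hn e He Hsub. destruct (le_lt_dec (card e) e) as [|Hlt]; auto. exfalso.
  apply (Hn (rval rbound [e])). exists (e - n).
  replace (rval rbound [e]) with (req_len canonical_reqs n (e - n)) by (simpl; do 3 f_equal; lia).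
  apply req_sat_prefix.
  - change (S (n + (e - n)) <=? card (n + (e - n)) = true).
    replace (n + (e - n)) with e by lia. apply Nat.leb_le. lia.
  - intros j _ Hj. change (D (n + (e - n)) j = true) in Hj. change (A j = true).
    replace (n + (e - n)) with e in Hj by lia. auto.
Qed.

End Immunity.

Theorem mainTheorem11 (A : nat -> bool) :
  SchnorrRandom A -> canonically_immune A.
Proof.
  intros HR. split; [apply Schnorr_random_infinite; auto|].
  exists (fun e => e). split; [exists (cProj 0); intros x; apply (ev_proj 0 [x])|].
  intros D HD.
  destruct (canonical_numbering_rfuns D HD) as (card & rD & rcard & rbound & rDE & rcardE & rbound_spec & Hcard).
  destruct (HR _ (req_test_Schnorr (canonical_reqs D card rD rcard rbound rDE rcardE rbound_spec)))
    as [n Hn].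
  exists n. intros e He Hsub l Hl HlD. rewrite (Hcard e l Hl HlD).
  apply (canonical_reqs_escape D card rD rcard rbound rDE rcardE rbound_spec A n Hn); auto.
Qed.
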